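(* For any $r_0>0$ and $0<b\le1/4$ there exists $B>1$ such that for every sequence of disks $D(z_j,r_j)$, $j\in\mathbb{N}$, satisfying $\sum_{|z_j|\le r}r_j\le r/B$ for all $r>0$, and for every point $z\notin D(r_0)$, there is $r_z$ with $0<r_z\le b|z|$ such that the circle $\partial D(z,r_z)$ does not intersect $\bigcup_{j\in\mathbb{N}}D(z_j,r_j)$.
   Context: $D(z,r)=\{w:|w-z|<r\}$, $D(r)=D(0,r)$. *)

From Stdlib Require Import Reals.
From Coquelicot Require Export Coquelicot.
Open Scope R_scope.

Definition disk (z : C) (r : R) : C -> Prop := fun w => Cmod (w - z) < r.

Definition circle (z : C) (r : R) : C -> Prop := fun w => Cmod (w - z) = r.

Definition partial_mass (zs : nat -> C) (rs : nat -> R) (r : R) (n : nat) : R :=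
  sum_f_R0 (fun j => if Rle_dec (Cmod (zs j)) r then rs j else 0) n.

(* The series sum_{|z_j| <= r} r_j (nonnegative terms) is <= c
   iff all its partial sums are <= c. *)
Definition mass_le (zs : nat -> C) (rs : nat -> R) (r c : R) : Prop :=
  forall n : nat, partial_mass zs rs r n <= c.

(* A circle dD(z,t) meets D(z_j,r_j) only if t lies in the open interval of
   length 2 r_j centred at |z - z_j|.  The mass condition forces r_j <= |z_j|/B,
   so for t <= b|z| only the disks with |z_j| <= 2(1+b)|z| matter, and their
   intervals have total length at most 4(1+b)|z|/B < b|z|/2 when B = 16/b.
   Countably many open intervals of total length smaller than b|z|/2 cannot
   cover [b|z|/2, b|z|]: otherwise the supremum s of the points x up to which
   the intervals carry length at least x - b|z|/2 could be pushed past itself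
   inside an interval covering s. *)

From Stdlib Require Import Reals Lra Lia Classical.
From Coquelicot Require Import Coquelicot.
Open Scope R_scope.

Lemma sum_f_R0_monotone (f : nat -> R) (n m : nat) :
  (forall k, 0 <= f k) -> (n <= m)%nat -> sum_f_R0 f n <= sum_f_R0 f m.
Proof.
  intros Hf Hnm. induction Hnm as [|m _ IH]; [lra|].
  simpl. specialize (Hf (S m)). lra.
Qed.

Lemma sum_f_R0_ge_term (f : nat -> R) (n k : nat) :
  (forall j, 0 <= f j) -> (k <= n)%nat -> f k <= sum_f_R0 f n.
Proof.
  intros Hf Hk. apply Rle_trans with (sum_f_R0 f k).
  - destruct k as [|k]; simpl; [lra|].
    pose proof (cond_pos_sum f k Hf). lra.
  - exact (sum_f_R0_monotone f k n Hf Hk).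
Qed.

Section OpenIntervalCover.

Variables l u : nat -> R.

Definition length_below (k : nat) (x : R) : R := Rmax 0 (Rmin (u k) x - l k).

Definition total_length_below (n : nat) (x : R) : R :=
  sum_f_R0 (fun k => length_below k x) n.

Definition mass_reaches (a x : R) : Prop :=
  exists n, x - a <= total_length_below n x.

Lemma length_below_ge0 k x : 0 <= length_below k x.
Proof. apply Rmax_l. Qed.

Lemma length_below_le_compat k x y : x <= y -> length_below k x <= length_below k y.
Proof.
  intros Hxy. unfold length_below. apply Rle_max_compat_l.
  unfold Rmin. destruct (Rle_dec (u k) x), (Rle_dec (u k) y); lra.
Qed.

Lemma length_below_inside k x : l k <= x <= u k -> length_below k x = x - l k.
Proof.
  intros Hx. unfold length_below.
  rewrite Rmin_right by lra. rewrite Rmax_right; lra.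
Qed.

Lemma length_below_le_length k x : length_below k x <= Rmax 0 (u k - l k).
Proof.
  unfold length_below. apply Rle_max_compat_l. pose proof (Rmin_l (u k) x). lra.
Qed.

Lemma total_length_below_increment n k x y : (k <= n)%nat -> x <= y ->
  length_below k y - length_below k x <= total_length_below n y - total_length_below n x.
Proof.
  intros Hk Hxy. unfold total_length_below. rewrite <- minus_sum.
  apply (sum_f_R0_ge_term (fun j => length_below j y - length_below j x)); [|exact Hk].
  intros j. pose proof (length_below_le_compat j x y Hxy). lra.
Qed.

Lemma mass_reaches_refl a : mass_reaches a a.
Proof.
  exists 0%nat. unfold total_length_below. simpl.
  pose proof (length_below_ge0 0 a). lra.
Qed.

Lemma mass_reaches_extend a x y k :
  mass_reaches a x -> l k <= x -> x <= y <= u k -> mass_reaches a y.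
Proof.
  intros [n Hn] Hlx Hy. exists (Nat.max n k).
  pose proof (sum_f_R0_monotone (fun j => length_below j x) n (Nat.max n k)
                (fun j => length_below_ge0 j x) ltac:(lia)) as Hmono.
  pose proof (total_length_below_increment (Nat.max n k) k x y ltac:(lia) (proj1 Hy))
    as Hincr.
  rewrite (length_below_inside k x), (length_below_inside k y) in Hincr by lra.
  unfold total_length_below in *. lra.
Qed.

Lemma mass_reaches_le a b M :
  (forall n, sum_f_R0 (fun k => Rmax 0 (u k - l k)) n <= M) ->
  mass_reaches a b -> b - a <= M.
Proof.
  intros HM [n Hn]. eapply Rle_trans; [exact Hn|].
  eapply Rle_trans; [|exact (HM n)].
  apply sum_growing. intros k. apply length_below_le_length.
Qed.

Lemma exists_uncovered_point a b M :
  (forall n, sum_f_R0 (fun k => Rmax 0 (u k - l k)) n <= M) -> M < b - a ->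
  exists t, a <= t <= b /\ forall k, ~ (l k < t < u k).
Proof.
  intros HM HMab.
  assert (Hab : a <= b).
  { pose proof (HM 0%nat) as H0. simpl in H0. pose proof (Rmax_l 0 (u 0%nat - l 0%nat)). lra. }
  apply NNPP. intros Hno.
  assert (Hcov : forall t, a <= t <= b -> exists k, l k < t < u k).
  { intros t Ht. apply NNPP. intros Hn. apply Hno. exists t. split; [exact Ht|].
    intros k Hk. apply Hn. exists k. exact Hk. }
  set (E := fun x => a <= x <= b /\ mass_reaches a x).
  destruct (completeness E) as [s [Hub Hlub]].
  { exists b. intros x [Hx _]. lra. }
  { exists a. split; [lra|apply mass_reaches_refl]. }
  assert (Has : a <= s) by (apply Hub; split; [lra|apply mass_reaches_refl]).
  assert (Hsb : s <= b) by (apply Hlub; intros x [Hx _]; lra).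
  destruct (Hcov s (conj Has Hsb)) as [k [Hls Hsu]].
  assert (Hx : exists x, E x /\ l k < x).
  { apply NNPP. intros Hn.
    assert (s <= l k); [|lra].
    apply Hlub. intros x Ex. apply Rnot_lt_le. intros Hlt. apply Hn. exists x. auto. }
  destruct Hx as [x [[Hxab Hx] Hlx]].
  assert (Hxs : x <= s) by (apply Hub; split; assumption).
  set (y := Rmin b (u k)).
  assert (Hy : x <= y <= b /\ y <= u k /\ (y < u k -> y = b)).
  { unfold y, Rmin. destruct (Rle_dec b (u k)); lra. }
  assert (Hyreach : mass_reaches a y) by (apply (mass_reaches_extend a x y k Hx); lra).
  assert (Hys : y <= s) by (apply Hub; split; [lra|exact Hyreach]).
  assert (Hyb : y = b) by (apply Hy; lra).
  rewrite Hyb in Hyreach. pose proof (mass_reaches_le a b M HM Hyreach). lra.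
Qed.

End OpenIntervalCover.

Lemma Cmod_sub_sym (a b : C) : Cmod (a - b) = Cmod (b - a).
Proof. rewrite <- Cmod_opp. f_equal. ring. Qed.

Lemma Cmod_sub_triangle (a b c : C) : Cmod (a - c) <= Cmod (a - b) + Cmod (b - c).
Proof.
  replace (a - c)%C with ((a - b) + (b - c))%C by ring. apply Cmod_triangle.
Qed.

Lemma circle_meet_disk (z c w : C) (t r : R) :
  circle z t w -> disk c r w -> Cmod (z - c) - r < t < Cmod (z - c) + r.
Proof.
  unfold circle, disk. intros Hw Hd.
  pose proof (Cmod_sub_triangle z w c). pose proof (Cmod_sub_triangle w c z).
  rewrite (Cmod_sub_sym z w) in *. rewrite (Cmod_sub_sym c z) in *. lra.
Qed.

Lemma small_far_disk_beyond (z c : C) (r t : R) :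
  r <= Cmod c / 2 -> 2 * (Cmod z + t) < Cmod c -> t < Cmod (z - c) - r.
Proof.
  intros Hr Hc. pose proof (Cmod_sub_triangle c z 0) as Htri.
  replace (c - 0)%C with c in Htri by ring. replace (z - 0)%C with z in Htri by ring.
  rewrite (Cmod_sub_sym c z) in Htri. lra.
Qed.

Lemma partial_mass_ge_term zs rs r n j : (forall i, 0 <= rs i) ->
  (j <= n)%nat -> Cmod (zs j) <= r -> rs j <= partial_mass zs rs r n.
Proof.
  intros Hpos Hjn Hzj. unfold partial_mass.
  pose proof (sum_f_R0_ge_term (fun i => if Rle_dec (Cmod (zs i)) r then rs i else 0) n j)
    as Hterm.
  simpl in Hterm. destruct (Rle_dec (Cmod (zs j)) r) as [_|]; [|contradiction].
  apply Hterm; [|exact Hjn].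
  intros i. destruct (Rle_dec (Cmod (zs i)) r); [apply Hpos|lra].
Qed.

Lemma radius_le_center_norm zs rs B j : 0 < B -> (forall i, 0 < rs i) ->
  (forall r, 0 < r -> mass_le zs rs r (r / B)) -> rs j <= Cmod (zs j) / B.
Proof.
  intros HB Hpos Hmass. apply Rle_plus_epsilon. intros eps Heps.
  set (r := Cmod (zs j) + eps * B).
  assert (Hr : 0 < r) by (unfold r; pose proof (Cmod_ge_0 (zs j)); nra).
  replace (Cmod (zs j) / B + eps) with (r / B) by (unfold r; field; lra).
  apply Rle_trans with (partial_mass zs rs r j); [|apply (Hmass r Hr)].
  apply partial_mass_ge_term; [intros i; apply Rlt_le, Hpos | lia |].
  unfold r. nra.
Qed.

Lemma exists_free_circle zs rs B (z : C) (a b : R) :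
  (forall j, 0 < rs j) -> 2 <= B -> (forall r, 0 < r -> mass_le zs rs r (r / B)) ->
  0 < b -> 4 * (Cmod z + b) / B < b - a ->
  exists t, a <= t <= b /\
    forall w, circle z t w -> forall j, ~ disk (zs j) (rs j) w.
Proof.
  intros Hpos HB Hmass Hb Hlen.
  assert (Hsmall : forall j, rs j <= Cmod (zs j) / 2).
  { intros j. apply Rle_trans with (Cmod (zs j) / B).
    - apply (radius_le_center_norm zs rs B j); auto; lra.
    - apply Rmult_le_compat_l; [apply Cmod_ge_0|apply Rinv_le_contravar; lra]. }
  set (R0 := 2 * (Cmod z + b)).
  set (l := fun j => Cmod (z - zs j) - rs j).
  (* Disks centred outside D(R0) get the empty interval: they lie beyond radius b anyway. *)
  set (u := fun j => if Rle_dec (Cmod (zs j)) R0 then Cmod (z - zs j) + rs j else l j).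
  assert (Hmass_u : forall n, sum_f_R0 (fun k => Rmax 0 (u k - l k)) n <= 4 * (Cmod z + b) / B).
  { intros n.
    replace (sum_f_R0 (fun k => Rmax 0 (u k - l k)) n) with (2 * partial_mass zs rs R0 n).
    - replace (4 * (Cmod z + b) / B) with (2 * (R0 / B)) by (unfold R0; field; lra).
      apply Rmult_le_compat_l; [lra|]. apply Hmass. unfold R0. pose proof (Cmod_ge_0 z). lra.
    - unfold partial_mass. rewrite scal_sum. apply sum_eq. intros k _.
      unfold u, l. destruct (Rle_dec (Cmod (zs k)) R0).
      + rewrite Rmax_right; pose proof (Hpos k); lra.
      + rewrite Rmax_left; lra. }
  destruct (exists_uncovered_point l u a b _ Hmass_u Hlen) as [t [Ht Hunc]].
  exists t. split; [exact Ht|].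
  intros w Hw j Hd. apply (Hunc j).
  pose proof (circle_meet_disk z (zs j) w t (rs j) Hw Hd) as Hmeet.
  unfold u, l. destruct (Rle_dec (Cmod (zs j)) R0) as [|Hfar]; [exact Hmeet|].
  pose proof (small_far_disk_beyond z (zs j) (rs j) b (Hsmall j) ltac:(unfold R0 in Hfar; lra)).
  lra.
Qed.

Theorem mainTheorem16 :
  forall (r0 b : R), 0 < r0 -> 0 < b -> b <= 1/4 ->
  exists B : R, 1 < B /\
    forall (zs : nat -> C) (rs : nat -> R),
      (forall j, 0 < rs j) ->
      (forall r : R, 0 < r -> mass_le zs rs r (r / B)) ->
      forall z : C, ~ disk 0 r0 z ->
        exists rz : R, 0 < rz /\ rz <= b * Cmod z /\
          forall w : C, circle z rz w -> forall j : nat, ~ disk (zs j) (rs j) w.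
Proof.
  intros r0 b Hr0 Hb Hb4.
  assert (HB : 16 / b * b = 16) by (field; lra).
  exists (16 / b). split; [nra|].
  intros zs rs Hpos Hmass z Hz.
  assert (Hrho : 0 < b * Cmod z).
  { unfold disk in Hz. replace (z - 0)%C with z in Hz by ring.
    apply Rmult_lt_0_compat; lra. }
  destruct (exists_free_circle zs rs (16 / b) z (b * Cmod z / 2) (b * Cmod z)
              Hpos ltac:(nra) Hmass Hrho) as [t [Ht Hfree]].
  { replace (4 * (Cmod z + b * Cmod z) / (16 / b)) with (b * Cmod z * (1 + b) / 4)
      by (field; lra).
    nra. }
  exists t. repeat split; [nra|lra|exact Hfree].
Qed.
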